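(* Every locally finite quasivariety of Wajsberg hoops is a primitive variety.
   Context: Wajsberg hoops: basic hoops (0-free subreducts of prelinear divisible $\mathsf{FL}_{ew}$-algebras) satisfying $(x\to y)\to y\approx(y\to x)\to x$. A quasivariety is locally finite if its finitely generated members are finite. For a quasivariety $\mathcal Q$, a subquasivariety $\mathcal Q'$ is equational in $\mathcal Q$ if $\mathcal Q'=\mathbf H(\mathcal Q')\cap\mathcal Q$; $\mathcal Q$ is primitive if every subquasivariety of $\mathcal Q$ is equational in $\mathcal Q$ (equivalently, every subquasivariety of $\mathcal Q$ is structural, where $\mathcal Q$ is structural if for every subquasivariety $\mathcal Q'$, $\mathbf H(\mathcal Q')=\mathbf H(\mathcal Q)$ implies $\mathcal Q'=\mathcal Q$). *)

From Stdlib Require Import List.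
Import ListNotations.

Record halg := HAlg {
  carrier :> Type;
  hmul : carrier -> carrier -> carrier;
  himp : carrier -> carrier -> carrier;
  hone : carrier }.

Inductive term : Type :=
| Var : nat -> term
| Mul : term -> term -> term
| Imp : term -> term -> term
| One : term.

Fixpoint eval (A : halg) (v : nat -> A) (t : term) : A :=
  match t with
  | Var n => v n
  | Mul s u => hmul A (eval A v s) (eval A v u)
  | Imp s u => himp A (eval A v s) (eval A v u)
  | One => hone A
  end.

Definition equation := (term * term)%type.

Definition holds_in (A : halg) (v : nat -> A) (e : equation) : Prop :=
  eval A v (fst e) = eval A v (snd e).

Definition sat_eq (A : halg) (e : equation) : Prop :=
  forall v : nat -> A, holds_in A v e.

Record quasi_identity := QI { qi_prem : list equation; qi_concl : equation }.

Definition sat_qi (A : halg) (q : quasi_identity) : Prop :=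
  forall v : nat -> A,
    (forall e, In e (qi_prem q) -> holds_in A v e) -> holds_in A v (qi_concl q).

Definition hclass := halg -> Prop.

Definition subclass (K L : hclass) : Prop := forall A, K A -> L A.

Definition is_quasivariety (Q : hclass) : Prop :=
  exists S : quasi_identity -> Prop,
    forall A, Q A <-> (forall q, S q -> sat_qi A q).

Definition is_variety (Q : hclass) : Prop :=
  exists E : equation -> Prop,
    forall A, Q A <-> (forall e, E e -> sat_eq A e).

Definition is_hom (A B : halg) (f : A -> B) : Prop :=
  (forall x y, f (hmul A x y) = hmul B (f x) (f y)) /\
  (forall x y, f (himp A x y) = himp B (f x) (f y)) /\
  f (hone A) = hone B.

Definition Hcl (K : hclass) : hclass :=
  fun B => exists (A : halg) (f : A -> B),
    K A /\ is_hom A B f /\ (forall b, exists a, f a = b).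

Definition equational_in (Q' Q : hclass) : Prop :=
  forall A, Q' A <-> (Hcl Q' A /\ Q A).

Definition primitive (Q : hclass) : Prop :=
  forall Q' : hclass, is_quasivariety Q' -> subclass Q' Q -> equational_in Q' Q.

Definition finite_alg (A : halg) : Prop :=
  exists l : list A, forall a : A, In a l.

(* A is generated by the finite list gens (1 is a constant, so using it as
   default value for out-of-range variables adds nothing). *)
Definition generated_by (A : halg) (gens : list A) : Prop :=
  forall a : A, exists t : term, eval A (fun i => nth i gens (hone A)) t = a.

Definition finitely_generated (A : halg) : Prop :=
  exists gens : list A, generated_by A gens.

Definition locally_finite (Q : hclass) : Prop :=
  forall A, Q A -> finitely_generated A -> finite_alg A.

Definition x := Var 0.
Definition y := Var 1.
Definition z := Var 2.

Definition hoop_axioms : list equation :=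
  [ (Mul x One, x);
    (Mul x y, Mul y x);
    (Mul x (Mul y z), Mul (Mul x y) z);
    (Imp x x, One);
    (Mul x (Imp x y), Mul y (Imp y x));
    (Imp (Mul x y) z, Imp x (Imp y z)) ].

Definition basic_axiom : equation :=
  (Imp (Imp (Imp x y) z) (Imp (Imp (Imp y x) z) z), One).

Definition wajsberg_axiom : equation :=
  (Imp (Imp x y) y, Imp (Imp y x) x).

Definition wajsberg_hoop (A : halg) : Prop :=
  (forall e, In e hoop_axioms -> sat_eq A e) /\
  sat_eq A basic_axiom /\ sat_eq A wajsberg_axiom.

(* The whole argument rests on one property of finite Wajsberg hoops C: for any
   homomorphism h : C -> B, let e be the least element of the filter h⁻¹(1);
   e is idempotent and c ↦ e → c is an endomorphism of C that factors through
   h and identifies exactly what h identifies, so the image of h embeds back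
   into C ([finite_wajsberg_retraction]).  Its proof uses the hoop order, a
   bottom element (the product of all elements) and, for multiplicativity, the
   prelinearity and Wajsberg identities via the "complement" e → ⊥ of e.

   Consequently every quasi-identity of C holds in the image of h, and since a
   quasi-identity only involves finitely many values, local finiteness makes
   every such Q closed under homomorphic images
   ([locally_finite_wajsberg_H_closed]).  A quasivariety closed under H is a
   variety (the subalgebra generated by a valuation in a model of the
   identities of Q is a homomorphic image of the free algebra of Q), and a
   subquasivariety closed under H is equational in Q.  Every subquasivariety
   of Q is again a locally finite quasivariety of Wajsberg hoops, which gives
   primitivity. *)
From Stdlib Require Import List Classical ClassicalEpsilon FunctionalExtensionality
  PropExtensionality ProofIrrelevance Lia.

Lemma hom_eval (A B : halg) (f : A -> B) : is_hom A B f ->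
  forall v t, f (eval A v t) = eval B (fun i => f (v i)) t.
Proof.
  intros (Hmul & Himp & Hone) v t.
  induction t as [n | t1 IH1 t2 IH2 | t1 IH1 t2 IH2 |]; simpl.
  - reflexivity.
  - rewrite Hmul, IH1, IH2; reflexivity.
  - rewrite Himp, IH1, IH2; reflexivity.
  - exact Hone.
Qed.

Lemma hom_comp (A B D : halg) (f : A -> B) (g : B -> D) :
  is_hom A B f -> is_hom B D g -> is_hom A D (fun a => g (f a)).
Proof.
  intros (Fmul & Fimp & Fone) (Gmul & Gimp & Gone); split; [| split].
  - intros a b; rewrite Fmul, Gmul; reflexivity.
  - intros a b; rewrite Fimp, Gimp; reflexivity.
  - rewrite Fone, Gone; reflexivity.
Qed.

Lemma hom_holds_in (A B : halg) (f : A -> B) (v : nat -> A) (e : equation) :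
  is_hom A B f ->
  holds_in B (fun i => f (v i)) e <-> f (eval A v (fst e)) = f (eval A v (snd e)).
Proof. intro Hf; unfold holds_in; rewrite !(hom_eval A B f Hf); tauto. Qed.

Lemma embedding_reflects_qi (A B : halg) (f : A -> B) (q : quasi_identity) :
  is_hom A B f -> (forall a b, f a = f b -> a = b) -> sat_qi B q -> sat_qi A q.
Proof.
  intros Hf Hinj Hq v Hprem.
  apply Hinj, (hom_holds_in A B f v _ Hf), Hq.
  intros e He; apply (hom_holds_in A B f v _ Hf); f_equal; apply Hprem, He.
Qed.

Fixpoint var_bound (t : term) : nat :=
  match t with
  | Var n => S n
  | Mul a b | Imp a b => max (var_bound a) (var_bound b)
  | One => 0
  end.

Lemma eval_ext (A : halg) (v v' : nat -> A) (t : term) :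
  (forall i, i < var_bound t -> v i = v' i) -> eval A v t = eval A v' t.
Proof.
  induction t as [n | t1 IH1 t2 IH2 | t1 IH1 t2 IH2 |]; simpl; intro Hv.
  - apply Hv; lia.
  - rewrite IH1, IH2 by (intros; apply Hv; lia); reflexivity.
  - rewrite IH1, IH2 by (intros; apply Hv; lia); reflexivity.
  - reflexivity.
Qed.

Definition eq_var_bound (e : equation) : nat := max (var_bound (fst e)) (var_bound (snd e)).

Lemma holds_in_ext (A : halg) (v v' : nat -> A) (e : equation) :
  (forall i, i < eq_var_bound e -> v i = v' i) -> holds_in A v e <-> holds_in A v' e.
Proof.
  intro Hv; unfold holds_in, eq_var_bound in *.
  rewrite (eval_ext A v v' (fst e)), (eval_ext A v v' (snd e))
    by (intros; apply Hv; lia).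
  tauto.
Qed.

Definition qi_var_bound (q : quasi_identity) : nat :=
  fold_right (fun e n => max (eq_var_bound e) n) (eq_var_bound (qi_concl q)) (qi_prem q).

Lemma qi_var_bound_prem q e : In e (qi_prem q) -> eq_var_bound e <= qi_var_bound q.
Proof.
  unfold qi_var_bound; induction (qi_prem q) as [| e' l IH]; simpl; [tauto |].
  intros [<- | He]; [lia | specialize (IH He); lia].
Qed.

Lemma qi_var_bound_concl q : eq_var_bound (qi_concl q) <= qi_var_bound q.
Proof. unfold qi_var_bound; induction (qi_prem q); simpl; lia. Qed.

Lemma nth_map_seq {T : Type} (g : nat -> T) (n i : nat) (d : T) :
  i < n -> nth i (map g (seq 0 n)) d = g i.
Proof.
  intro Hi; rewrite nth_indep with (d' := g 0) by (rewrite length_map, length_seq; lia).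
  rewrite map_nth, seq_nth by lia; reflexivity.
Qed.

Section GeneratedSubalgebra.
Variables (A : halg) (w : nat -> A).

Definition generated (a : A) : Prop := exists t, eval A w t = a.

Lemma generated_mul a b : generated a -> generated b -> generated (hmul A a b).
Proof. intros [t <-] [s <-]; exists (Mul t s); reflexivity. Qed.

Lemma generated_imp a b : generated a -> generated b -> generated (himp A a b).
Proof. intros [t <-] [s <-]; exists (Imp t s); reflexivity. Qed.

Lemma generated_one : generated (hone A).
Proof. exists One; reflexivity. Qed.

Definition Gen : halg :=
  HAlg {a : A | generated a}
    (fun a b => exist _ _ (generated_mul _ _ (proj2_sig a) (proj2_sig b)))
    (fun a b => exist _ _ (generated_imp _ _ (proj2_sig a) (proj2_sig b)))
    (exist _ _ generated_one).

Definition gen_var (i : nat) : Gen := exist _ (w i) (ex_intro _ (Var i) eq_refl).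

Lemma gen_eq (a b : Gen) : proj1_sig a = proj1_sig b -> a = b.
Proof.
  destruct a as [a Ha], b as [b Hb]; simpl; intros <-.
  f_equal; apply proof_irrelevance.
Qed.

Lemma gen_incl_hom : is_hom Gen A (@proj1_sig _ _).
Proof. split; [| split]; reflexivity. Qed.

Lemma gen_var_eval t : proj1_sig (eval Gen gen_var t) = eval A w t.
Proof. exact (hom_eval _ _ _ gen_incl_hom gen_var t). Qed.

Lemma gen_holds_in e : holds_in Gen gen_var e <-> holds_in A w e.
Proof.
  unfold holds_in; rewrite <- !gen_var_eval; split.
  - intros He; rewrite He; reflexivity.
  - apply gen_eq.
Qed.

Lemma gen_generated (a : Gen) : exists t, eval Gen gen_var t = a.
Proof.
  destruct a as [a [t Ht]]; exists t.
  apply gen_eq; rewrite gen_var_eval; exact Ht.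
Qed.

Lemma quasivariety_gen (Q : hclass) : is_quasivariety Q -> Q A -> Q Gen.
Proof.
  intros [S HS] QA; apply HS; intros q Sq.
  apply (embedding_reflects_qi Gen A _ q gen_incl_hom gen_eq).
  exact (proj1 (HS A) QA q Sq).
Qed.
End GeneratedSubalgebra.

Lemma gen_list_finitely_generated (A : halg) (l : list A) :
  finitely_generated (Gen A (fun i => nth i l (hone A))).
Proof.
  set (w := fun i => nth i l (hone A)).
  exists (map (gen_var A w) (seq 0 (length l))); intro a.
  destruct (gen_generated A w a) as [t <-]; exists t.
  apply eval_ext; intros i _.
  destruct (Compare_dec.lt_dec i (length l)) as [Hi | Hi].
  - apply nth_map_seq, Hi.
  - rewrite nth_overflow by (rewrite length_map, length_seq; lia).
    apply gen_eq; simpl; unfold w; rewrite nth_overflow by lia; reflexivity.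
Qed.

Definition hoop (A : halg) : Prop := forall e, In e hoop_axioms -> sat_eq A e.

Definition val3 (A : halg) (a b c : A) : nat -> A :=
  fun n => match n with 0 => a | 1 => b | _ => c end.

Section HoopArithmetic.
Variable C : halg.
Hypothesis HC : hoop C.

Local Notation "a ** b" := (hmul C a b) (at level 40, left associativity).
Local Notation "a --> b" := (himp C a b) (at level 55, right associativity).
Local Notation one := (hone C).

Lemma mul_one a : a ** one = a.
Proof. exact (HC (Mul x One, x) ltac:(simpl; tauto) (val3 C a a a)). Qed.

Lemma mul_comm a b : a ** b = b ** a.
Proof. exact (HC (Mul x y, Mul y x) ltac:(simpl; tauto) (val3 C a b a)). Qed.

Lemma mul_assoc a b c : a ** (b ** c) = a ** b ** c.
Proof.
  exact (HC (Mul x (Mul y z), Mul (Mul x y) z) ltac:(simpl; tauto) (val3 C a b c)).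
Qed.

Lemma imp_self a : a --> a = one.
Proof. exact (HC (Imp x x, One) ltac:(simpl; tauto) (val3 C a a a)). Qed.

Lemma mul_imp_sym a b : a ** (a --> b) = b ** (b --> a).
Proof.
  exact (HC (Mul x (Imp x y), Mul y (Imp y x)) ltac:(simpl; tauto) (val3 C a b a)).
Qed.

Lemma imp_mul a b c : (a ** b) --> c = a --> b --> c.
Proof.
  exact (HC (Imp (Mul x y) z, Imp x (Imp y z)) ltac:(simpl; tauto) (val3 C a b c)).
Qed.

Definition hle (a b : C) : Prop := a --> b = one.

Lemma hle_antisym a b : hle a b -> hle b a -> a = b.
Proof.
  unfold hle; intros Hab Hba.
  rewrite <- (mul_one a), <- Hab, mul_imp_sym, Hba, mul_one; reflexivity.
Qed.

Lemma hle_refl a : hle a a.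
Proof. apply imp_self. Qed.

Lemma residuation a b c : hle (a ** b) c <-> hle a (b --> c).
Proof. unfold hle; rewrite imp_mul; tauto. Qed.

Lemma one_imp a : one --> a = a.
Proof.
  apply hle_antisym; unfold hle.
  - rewrite <- (mul_one (one --> a)) at 1; rewrite imp_mul; apply imp_self.
  - rewrite <- imp_mul, mul_one; apply imp_self.
Qed.

Lemma imp_one a : a --> one = one.
Proof.
  assert (Ha : a ** (a --> one) = a).
  { rewrite mul_imp_sym, one_imp, mul_comm, mul_one; reflexivity. }
  rewrite <- (imp_self (a --> one)) at 2; rewrite <- imp_mul, mul_comm, Ha; reflexivity.
Qed.

Lemma mul_hle_l a b : hle (a ** b) a.
Proof. unfold hle; rewrite mul_comm, imp_mul, imp_self, imp_one; reflexivity. Qed.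

Lemma modus_ponens a b : hle (a ** (a --> b)) b.
Proof. unfold hle; rewrite mul_comm, imp_mul, imp_self; reflexivity. Qed.

Lemma hle_trans a b c : hle a b -> hle b c -> hle a c.
Proof.
  unfold hle; intros Hab Hbc.
  assert (Ha : a = b ** (b --> a)) by (rewrite <- mul_imp_sym, Hab, mul_one; reflexivity).
  rewrite Ha, mul_comm, imp_mul, Hbc, imp_one; reflexivity.
Qed.

Lemma mul_hle_mono a a' b b' : hle a a' -> hle b b' -> hle (a ** b) (a' ** b').
Proof.
  intros Ha Hb.
  assert (mono_l : forall u u' v, hle u u' -> hle (u ** v) (u' ** v)).
  { intros u u' v Hu; apply <- residuation; apply (hle_trans _ _ _ Hu).
    apply -> residuation; apply hle_refl. }
  apply hle_trans with (a' ** b); [apply mono_l, Ha |].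
  rewrite (mul_comm a' b), (mul_comm a' b'); apply mono_l, Hb.
Qed.

Lemma imp_hle_anti_l a b c : hle a b -> hle (b --> c) (a --> c).
Proof.
  intro Hab; apply -> residuation; apply hle_trans with ((b --> c) ** b).
  - apply mul_hle_mono; [apply hle_refl | exact Hab].
  - rewrite mul_comm; apply modus_ponens.
Qed.

Lemma hle_imp_r a c : hle c (a --> c).
Proof. apply -> residuation; apply mul_hle_l. Qed.

(* A submonoid P of a hoop contains a lower bound of its members in any
   finite list; with P := True this yields a bottom element of a finite hoop. *)
Lemma submonoid_lower_bound (P : C -> Prop) :
  P one -> (forall a b, P a -> P b -> P (a ** b)) ->
  forall L : list C, exists e, P e /\ forall c, In c L -> P c -> hle e c.
Proof.
  intros P1 Pmul L; induction L as [|a L [e [Pe He]]].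
  - exists one; split; [exact P1 | intros c []].
  - destruct (classic (P a)) as [Pa | nPa].
    + exists (e ** a); split; [now apply Pmul |].
      intros c [<- | Hc] Pc; [rewrite mul_comm; apply mul_hle_l |].
      apply hle_trans with e; [apply mul_hle_l | now apply He].
    + exists e; split; [exact Pe |].
      intros c [<- | Hc] Pc; [contradiction | now apply He].
Qed.

Section IdempotentImplication.
Variable e : C.
Hypothesis He : e ** e = e.

Lemma idem_spread a b : a ** b ** e = e ** a ** (e ** b).
Proof.
  symmetry.
  rewrite mul_assoc, (mul_comm e a), <- (mul_assoc a e e), He,
    <- (mul_assoc a e b), (mul_comm e b), mul_assoc; reflexivity.
Qed.

Lemma idem_imp_imp c d : e --> (c --> d) = (e --> c) --> (e --> d).
Proof.
  apply hle_antisym.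
  - do 2 apply -> residuation; rewrite idem_spread.
    apply hle_trans with ((c --> d) ** c).
    + apply mul_hle_mono; apply modus_ponens.
    + rewrite mul_comm; apply modus_ponens.
  - rewrite <- (imp_mul e c d), (mul_comm e c), imp_mul; apply imp_hle_anti_l, hle_imp_r.
Qed.

Lemma idem_imp_hle c d : hle e (c --> d) -> hle (e --> c) (e --> d).
Proof.
  intro Hcd; apply -> residuation; rewrite mul_comm.
  rewrite <- He at 1; rewrite <- mul_assoc.
  apply hle_trans with (e ** c).
  - apply mul_hle_mono; [apply hle_refl | apply modus_ponens].
  - apply <- residuation; exact Hcd.
Qed.
End IdempotentImplication.

Section BoundedWajsberg.
Hypothesis Hbasic : sat_eq C basic_axiom.
Hypothesis Hwaj : sat_eq C wajsberg_axiom.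

Lemma prelinearity a b c : ((a --> b) --> c) --> ((b --> a) --> c) --> c = one.
Proof. exact (Hbasic (val3 C a b c)). Qed.

Lemma wajsberg a b : (a --> b) --> b = (b --> a) --> a.
Proof. exact (Hwaj (val3 C a b a)). Qed.

(* For an idempotent e of a hoop with bottom element, q := e → ⊥ is the
   "complement" of e: every element lies below e or below q, in the sense of
   [hle_by_cases], and c ↦ e → c becomes multiplicative. *)
Variables e bot : C.
Hypothesis He : e ** e = e.
Hypothesis Hbot : forall c, hle bot c.

Let q := e --> bot.

Lemma idem_imp_compl : e --> q = q.
Proof. unfold q; rewrite <- imp_mul, He; reflexivity. Qed.

Lemma compl_imp_idem_hle : hle (q --> e) e.
Proof. unfold hle; rewrite wajsberg, idem_imp_compl; apply imp_self. Qed.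

Lemma hle_by_cases t w : hle (e ** t) w -> hle (q ** t) w -> hle t w.
Proof.
  intros Het Hqt.
  pose proof (prelinearity e q (t --> w)) as P.
  rewrite idem_imp_compl, <- (imp_mul q t w) in P.
  unfold hle in Hqt; rewrite Hqt, one_imp in P.
  assert (Hqe : (q --> e) ** t --> w = one).
  { apply hle_trans with (e ** t); [| exact Het].
    apply mul_hle_mono; [apply compl_imp_idem_hle | apply hle_refl]. }
  rewrite <- (imp_mul (q --> e) t w), Hqe, one_imp in P.
  exact P.
Qed.

Lemma compl_hle_idem_imp c : hle q (e --> c).
Proof.
  apply -> residuation.
  rewrite mul_comm.
  apply hle_trans with bot; [apply modus_ponens | apply Hbot].
Qed.

Lemma compl_idem : q ** q = q.
Proof.
  apply hle_antisym; [apply mul_hle_l |].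
  apply hle_by_cases.
  - apply hle_trans with bot; [apply modus_ponens | apply Hbot].
  - apply hle_refl.
Qed.

Lemma idem_imp_mul c d : e --> (c ** d) = (e --> c) ** (e --> d).
Proof.
  apply hle_antisym; [apply hle_by_cases |].
  - apply hle_trans with (c ** d); [apply modus_ponens |].
    apply mul_hle_mono; [apply hle_imp_r | apply hle_imp_r].
  - apply hle_trans with q; [apply mul_hle_l |].
    rewrite <- compl_idem at 1.
    apply mul_hle_mono; [apply compl_hle_idem_imp | apply compl_hle_idem_imp].
  - apply -> residuation.
    rewrite idem_spread by assumption.
    apply mul_hle_mono; [apply modus_ponens | apply modus_ponens].
Qed.
End BoundedWajsberg.
End HoopArithmetic.

Section Kernel.
Variables (C B : halg) (h : C -> B).
Hypothesis HC : hoop C.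
Hypothesis Hh : is_hom C B h.

Lemma kernel_mul_closed a b :
  h a = hone B -> h b = hone B -> h (hmul C a b) = hone B.
Proof.
  destruct Hh as (Hmul & _ & Hone); intros Ha Hb.
  rewrite Hmul, Ha, Hb, <- Hone, <- Hmul, mul_one by exact HC; reflexivity.
Qed.

Lemma kernel_imp_of_eq c d : h c = h d -> h (himp C c d) = hone B.
Proof.
  destruct Hh as (_ & Himp & Hone); intro Hcd.
  rewrite Himp, Hcd, <- Himp, imp_self by exact HC; exact Hone.
Qed.

Lemma kernel_imp_l e c : h e = hone B -> h (himp C e c) = h c.
Proof.
  destruct Hh as (_ & Himp & Hone); intro He.
  rewrite Himp, He, <- Hone, <- Himp, one_imp by exact HC; reflexivity.
Qed.
End Kernel.

(* g retracts C onto a copy of the image of h: an endomorphism of C through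
   which h factors and which identifies whatever h identifies. *)
Definition image_retraction (C B : halg) (h : C -> B) (g : C -> C) : Prop :=
  is_hom C C g /\ (forall c, h (g c) = h c) /\ (forall c d, h c = h d -> g c = g d).

Lemma retraction_transfers_qi (C B : halg) (h : C -> B) (g : C -> C)
    (q : quasi_identity) (v : nat -> C) :
  is_hom C B h -> image_retraction C B h g -> sat_qi C q ->
  (forall e, In e (qi_prem q) -> holds_in B (fun i => h (v i)) e) ->
  holds_in B (fun i => h (v i)) (qi_concl q).
Proof.
  intros Hh (Hg & Hhg & Hgh) Hq Hprem.
  apply (hom_holds_in C B h v _ Hh).
  rewrite <- (Hhg (eval C v (fst (qi_concl q)))), <- (Hhg (eval C v (snd (qi_concl q)))).
  f_equal; apply (hom_holds_in C C g v _ Hg), Hq.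
  intros e He; apply (hom_holds_in C C g v _ Hg), Hgh, (hom_holds_in C B h v _ Hh).
  apply Hprem, He.
Qed.

(* The key fact about finite Wajsberg hoops: if e is the least element of the
   filter h⁻¹(1), then c ↦ e → c is an image retraction of h. *)
Lemma finite_wajsberg_retraction (C B : halg) (h : C -> B) :
  wajsberg_hoop C -> finite_alg C -> is_hom C B h ->
  exists g, image_retraction C B h g.
Proof.
  intros (HC & Hbasic & Hwaj) [L HL] Hh.
  destruct (submonoid_lower_bound C HC (fun _ => True) I (fun _ _ _ _ => I) L)
    as [bot [_ Hbot]].
  destruct (submonoid_lower_bound C HC (fun c => h c = hone B) (proj2 (proj2 Hh))
              (kernel_mul_closed C B h HC Hh) L) as [e [He Hmin]].
  assert (Hmin' : forall c, h c = hone B -> hle C e c) by (intros c Hc; apply Hmin; auto).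
  assert (Hidem : hmul C e e = e).
  { apply (hle_antisym C HC); [apply (mul_hle_l C HC) |].
    apply Hmin', (kernel_mul_closed C B h HC Hh); exact He. }
  exists (fun c => himp C e c); split; [split; [| split] | split].
  - apply (idem_imp_mul C HC Hbasic Hwaj e bot Hidem); auto.
  - apply (idem_imp_imp C HC e Hidem).
  - apply (imp_one C HC).
  - intro c; apply (kernel_imp_l C B h HC Hh), He.
  - intros c d Hcd; apply (hle_antisym C HC); apply (idem_imp_hle C HC e Hidem), Hmin';
      apply (kernel_imp_of_eq C B h HC Hh); [exact Hcd | symmetry; exact Hcd].
Qed.

Definition H_closed (K : hclass) : Prop :=
  forall (A B : halg) (f : A -> B), K A -> is_hom A B f -> (forall b, exists a, f a = b) -> K B.

(* To check a quasi-identity of Q in an image B of A ∈ Q at v, lift the finitely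
   many relevant values of v to A: they generate a finite member of Q, whose
   image retraction transfers the quasi-identity to B. *)
Lemma locally_finite_wajsberg_H_closed (Q : hclass) :
  is_quasivariety Q -> subclass Q wajsberg_hoop -> locally_finite Q -> H_closed Q.
Proof.
  intros HQ Hw Hlf A B f QA Hf Hsurj.
  destruct HQ as [S HS]; apply HS; intros q Sq v Hprem.
  set (N := qi_var_bound q).
  destruct (choice (fun i a => f a = v i) (fun i => Hsurj (v i))) as [lift Hlift].
  set (w := fun i => nth i (map lift (seq 0 N)) (hone A)).
  assert (Hw_lift : forall i, i < N -> f (w i) = v i).
  { intros i Hi; unfold w; rewrite nth_map_seq by exact Hi; apply Hlift. }
  set (G := Gen A w).
  assert (QG : Q G) by (apply quasivariety_gen; [exists S; exact HS | exact QA]).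
  assert (FG : finite_alg G) by (apply Hlf; [exact QG | apply gen_list_finitely_generated]).
  set (h := fun c : G => f (proj1_sig c)).
  assert (Hh : is_hom G B h) by exact (hom_comp _ _ _ _ _ (gen_incl_hom A w) Hf).
  destruct (finite_wajsberg_retraction G B h (Hw G QG) FG Hh) as [g Hg].
  assert (Hagree : forall e, eq_var_bound e <= N ->
            holds_in B v e <-> holds_in B (fun i => h (gen_var A w i)) e).
  { intros e He; apply holds_in_ext; intros i Hi; symmetry; apply Hw_lift; lia. }
  apply Hagree; [apply qi_var_bound_concl |].
  apply (retraction_transfers_qi G B h g q); [exact Hh | exact Hg | exact (proj1 (HS G) QG q Sq) |].
  intros e He; apply Hagree; [apply qi_var_bound_prem, He | apply Hprem, He].
Qed.

(* The free algebra of Q on countably many generators: terms modulo the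
   identities valid in Q, each class represented by a chosen term. *)
Section FreeAlgebra.
Variable Q : hclass.

Definition Q_equiv (t s : term) : Prop := forall C, Q C -> forall w, eval C w t = eval C w s.

Definition canon (t : term) : term := epsilon (inhabits One) (fun s => Q_equiv s t).

Lemma canon_equiv t : Q_equiv (canon t) t.
Proof.
  apply (epsilon_spec (inhabits One) (fun s => Q_equiv s t)).
  exists t; intros C _ w; reflexivity.
Qed.

Lemma canon_eq t s : Q_equiv t s -> canon t = canon s.
Proof.
  intro Hts; unfold canon; f_equal.
  apply functional_extensionality; intro u; apply propositional_extensionality.
  split; intros Hu C QC w; rewrite (Hu C QC w); [| symmetry]; apply Hts, QC.
Qed.

Definition free_class (t : term) : {t : term | canon t = t} :=
  exist _ (canon t) (canon_eq _ _ (canon_equiv t)).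

Definition Free : halg :=
  HAlg {t : term | canon t = t}
    (fun a b => free_class (Mul (proj1_sig a) (proj1_sig b)))
    (fun a b => free_class (Imp (proj1_sig a) (proj1_sig b)))
    (free_class One).

Lemma free_eq (a b : Free) : Q_equiv (proj1_sig a) (proj1_sig b) -> a = b.
Proof.
  destruct a as [a Ha], b as [b Hb]; simpl; intro Hab.
  assert (a = b) as <- by (rewrite <- Ha, <- Hb; apply canon_eq, Hab).
  f_equal; apply proof_irrelevance.
Qed.

Fixpoint subst (s : nat -> term) (t : term) : term :=
  match t with
  | Var n => s n
  | Mul a b => Mul (subst s a) (subst s b)
  | Imp a b => Imp (subst s a) (subst s b)
  | One => One
  end.

Lemma eval_subst C u s t : eval C u (subst s t) = eval C (fun i => eval C u (s i)) t.
Proof. induction t; simpl; congruence. Qed.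

Lemma eval_free w t : Q_equiv (proj1_sig (eval Free w t)) (subst (fun i => proj1_sig (w i)) t).
Proof.
  induction t as [n | t1 IH1 t2 IH2 | t1 IH1 t2 IH2 |]; intros C QC u; simpl;
    try rewrite (canon_equiv _ C QC u); simpl; try rewrite (IH1 C QC u), (IH2 C QC u);
    reflexivity.
Qed.

Lemma canon_sound (A : halg) :
  (forall e, (forall C, Q C -> sat_eq C e) -> sat_eq A e) ->
  forall v t, eval A v (canon t) = eval A v t.
Proof. intros HA v t; apply (HA (canon t, t)); intros C QC w; apply canon_equiv, QC. Qed.

Lemma free_in (S : quasi_identity -> Prop) :
  (forall A, Q A <-> (forall q, S q -> sat_qi A q)) -> Q Free.
Proof.
  intro HS; apply HS; intros q Sq w Hprem; apply free_eq; intros C QC u.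
  rewrite !(eval_free w _ C QC u), !eval_subst.
  apply (proj1 (HS C) QC q Sq); intros e He; unfold holds_in.
  rewrite <- !eval_subst, <- !(eval_free w _ C QC u), (Hprem e He); reflexivity.
Qed.
End FreeAlgebra.

(* A quasivariety closed under homomorphic images is the variety axiomatised by
   its identities: the subalgebra generated by any valuation in a model of those
   identities is a homomorphic image of the free algebra. *)
Lemma H_closed_quasivariety_is_variety (Q : hclass) :
  is_quasivariety Q -> H_closed Q -> is_variety Q.
Proof.
  intros [S HS] HH.
  exists (fun e => forall C, Q C -> sat_eq C e); intro A; split.
  - intros QA e He; exact (He A QA).
  - intro HA; apply HS; intros q Sq v Hprem.
    pose proof (canon_sound Q A HA v) as Hcanon.
    set (G := Gen A v).
    set (hf := fun a : Free Q =>
                 exist _ (eval A v (proj1_sig a)) (ex_intro _ (proj1_sig a) eq_refl) : G).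
    assert (QG : Q G).
    { apply (HH (Free Q) G hf (free_in Q S HS)).
      - split; [| split]; intros; apply gen_eq; simpl; apply Hcanon.
      - intros [b [t Ht]]; exists (free_class Q t); apply gen_eq; simpl.
        rewrite Hcanon; exact Ht. }
    apply gen_holds_in, (proj1 (HS G) QG q Sq).
    intros e He; apply gen_holds_in, Hprem, He.
Qed.

Lemma H_closed_equational (Q' Q : hclass) :
  H_closed Q' -> subclass Q' Q -> equational_in Q' Q.
Proof.
  intros HH Hsub A; split.
  - intro QA; split; [| exact (Hsub A QA)].
    exists A, (fun a => a); repeat split; eauto.
  - intros [[A0 [f (QA0 & Hf & Hsurj)]] _]; exact (HH A0 A f QA0 Hf Hsurj).
Qed.

Theorem theorem4p4 (Q : hclass) :
  is_quasivariety Q -> subclass Q wajsberg_hoop -> locally_finite Q ->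
  is_variety Q /\ primitive Q.
Proof.
  intros HQ Hw Hlf.
  assert (HH : H_closed Q) by (apply locally_finite_wajsberg_H_closed; assumption).
  split; [exact (H_closed_quasivariety_is_variety Q HQ HH) |].
  intros Q' HQ' Hsub; apply H_closed_equational; [| exact Hsub].
  apply locally_finite_wajsberg_H_closed; [exact HQ' | |].
  - intros A HA; apply Hw, Hsub, HA.
  - intros A HA; apply Hlf, Hsub, HA.
Qed.
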